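(* Let $n, q$ be positive integers, let $\mathcal{A} = \langle V, V_0, V_1, E\rangle$ be an arena (over some set of colors $C$) with $n$ nodes, let $U \subseteq V$, and let $S_1$ be a $q$-state strategy of Player 0 in $\mathcal{A}$. Then there exists a chromatic $(q+1)^n$-state strategy $S_2$ of Player 0 in $\mathcal{A}$ such that $\mathsf{col}(S_2, U) \subseteq \mathsf{col}(S_1, U)$.
   Context: An arena over a set of colors $C$ is a tuple $\mathcal{A} = \langle V, V_0, V_1, E\rangle$ of finite sets with $V = V_0 \sqcup V_1$, $E \subseteq V \times C \times V$, and every node having at least one outgoing edge; for $e=(s,c,t)$ write $\mathsf{source}(e)=s$, $\mathsf{col}(e)=c$, $\mathsf{target}(e)=t$. A path is a nonempty finite or infinite sequence of edges $e_1e_2\ldots$ with $\mathsf{target}(e_i)=\mathsf{source}(e_{i+1})$; for each node $v$ there is also a $0$-length path $\lambda_v$ with source and target $v$. $\mathsf{col}$ extends letterwise to sequences of edges. A strategy of Player 0 is a function $S$ assigning to each finite path $p$ with $\mathsf{target}(p)\in V_0$ an edge $S(p)$ with $\mathsf{source}(S(p))=\mathsf{target}(p)$. A path $p=e_1e_2\ldots$ is consistent with $S$ if (when $\mathsf{source}(p)\in V_0$) $e_1=S(\lambda_{\mathsf{source}(p)})$ and for each $1\le i<|p|$ with $\mathsf{target}(e_i)\in V_0$ we have $e_{i+1}=S(e_1\ldots e_i)$; $0$-length paths are always consistent. For $v\in V$, $\mathsf{col}(S,v)\subseteq C^\omega$ is the set of $\mathsf{col}(p)$ over all infinite paths $p$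 from $v$ consistent with $S$, and $\mathsf{col}(S,U)=\bigcup_{v\in U}\mathsf{col}(S,v)$. A memory structure is $\mathcal{M}=\langle M, m_{init},\delta\rangle$ with $M$ finite, $m_{init}\in M$, $\delta: M\times E\to M$ (extended to finite edge sequences in the usual way). $S$ is an $\mathcal{M}$-strategy if for all finite paths $p_1,p_2$ with $\mathsf{target}(p_1)=\mathsf{target}(p_2)\in V_0$, $\delta(m_{init},p_1)=\delta(m_{init},p_2)$ implies $S(p_1)=S(p_2)$. $\mathcal{M}$ is chromatic if there is $\sigma: M\times C\to M$ with $\delta(m,e)=\sigma(m,\mathsf{col}(e))$ for all $m,e$. A (chromatic) $q$-state strategy is an $\mathcal{M}$-strategy for some (chromatic) memory structure $\mathcal{M}$ with $|M|=q$. *)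

From mathcomp Require Import all_boot.
Set Implicit Arguments. Unset Strict Implicit. Unset Printing Implicit Defensive.

(* An arena over colors C.  Edges form a finite type [Ed] with source, color,
   target maps; an edge is determined by its triple (E is a set of triples). *)
Record arena (C : Type) := Arena {
  node : finType;
  V0 : {set node};                       (* V1 is the complement ~: V0 *)
  edge : finType;
  src : edge -> node;
  col : edge -> C;
  tgt : edge -> node;
  edge_inj : forall e1 e2, src e1 = src e2 -> col e1 = col e2 ->
             tgt e1 = tgt e2 -> e1 = e2;
  out_edge : forall v, exists e, src e = v
}.

Section Defs.
Variables (C : Type) (A : arena C).

Fixpoint chain (s : seq (edge A)) : bool :=
  match s with
  | e1 :: ((e2 :: _) as t) => (tgt e1 == src e2) && chain t
  | _ => true
  end.

(* A finite path is represented as (v, s): its source node v and its edge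
   sequence s; s = [::] is the 0-length path lambda_v. *)
Definition is_fpath (v : node A) (s : seq (edge A)) : bool :=
  (if s is e :: _ then src e == v else true) && chain s.

Definition ftarget (v : node A) (s : seq (edge A)) : node A :=
  last v (map (@tgt _ A) s).

(* Strategy of Player 0: function on finite paths (values outside finite
   paths ending in V0 are irrelevant). *)
Definition strategy := node A -> seq (edge A) -> edge A.

Definition is_strategy (S : strategy) : Prop :=
  forall v s, is_fpath v s -> ftarget v s \in V0 A ->
    src (S v s) = ftarget v s.

Definition consistent_inf_path (S : strategy) (v : node A)
    (e : nat -> edge A) : Prop :=
  src (e 0) = v /\
  (forall k, tgt (e k) = src (e k.+1)) /\
  (v \in V0 A -> e 0 = S v [::]) /\
  (forall k, tgt (e k) \in V0 A -> e k.+1 = S v (mkseq e k.+1)).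

Definition colS (S : strategy) (v : node A) : (nat -> C) -> Prop :=
  fun w => exists e, consistent_inf_path S v e /\ w = (fun i => col (e i)).

Definition colSU (S : strategy) (U : {set node A}) : (nat -> C) -> Prop :=
  fun w => exists2 v, v \in U & colS S v w.

Definition mem_strategy (M : finType) (minit : M) (delta : M -> edge A -> M)
    (S : strategy) : Prop :=
  forall v1 s1 v2 s2, is_fpath v1 s1 -> is_fpath v2 s2 ->
    ftarget v1 s1 = ftarget v2 s2 -> ftarget v1 s1 \in V0 A ->
    foldl delta minit s1 = foldl delta minit s2 ->
    S v1 s1 = S v2 s2.

Definition q_state (q : nat) (S : strategy) : Prop :=
  exists (M : finType) (minit : M) (delta : M -> edge A -> M),
    #|M| = q /\ mem_strategy minit delta S.

Definition chromatic_q_state (q : nat) (S : strategy) : Prop :=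
  exists (M : finType) (minit : M) (delta : M -> edge A -> M),
    #|M| = q /\ mem_strategy minit delta S /\
    (exists sigma : M -> C -> M, forall m e, delta m e = sigma m (col e)).

End Defs.

From mathcomp Require Import all_boot boolp.
Set Implicit Arguments. Unset Strict Implicit. Unset Printing Implicit Defensive.

(* Player 0's new memory is a partial map f from nodes to memory states of S1,
   updated so that f u = Some m records one S1-consistent play from U that
   carries the colours read so far and ends in u with memory m: on reading a
   colour c, every node u picks one edge of colour c into u, leaving a node
   already in the domain of f and agreeing with S1 there.  The update reads only
   colours, and there are (q+1)^n such maps.  S2 plays at u what S1 plays with
   memory f u.  Along an S2-play from U the current node is always in the domain,
   and every entry has a predecessor entry one step earlier, so Koenig's lemma
   gives an infinite chain of entries: an S1-consistent play from U with the same
   colours. *)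

Section InfinitePaths.
Variables (C : Type) (A : arena C).
Implicit Types (e : nat -> edge A) (v : node A).

Lemma chain_mkseq e k : (forall i, tgt (e i) = src (e i.+1)) -> chain (mkseq e k).
Proof.
move=> He; rewrite /mkseq; elim: k 0 => [|k IHk] i //=.
by case: k IHk => [|k] IHk //=; rewrite He eqxx; exact: IHk.
Qed.

Lemma fpath_mkseq e v k :
  src (e 0) = v -> (forall i, tgt (e i) = src (e i.+1)) -> is_fpath v (mkseq e k).
Proof.
by move=> e0 He; rewrite /is_fpath chain_mkseq // andbT; case: k => //= k; rewrite e0.
Qed.

Lemma ftarget_mkseq e v k :
  src (e 0) = v -> (forall i, tgt (e i) = src (e i.+1)) -> ftarget v (mkseq e k) = src (e k).
Proof. by move=> e0 He; case: k => // k; rewrite /ftarget mkseqS map_rcons last_rcons He. Qed.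

Lemma consistent_inf_pathE (S : strategy A) v e :
  consistent_inf_path S v e <->
  [/\ src (e 0) = v, forall k, tgt (e k) = src (e k.+1) &
      forall k, src (e k) \in V0 A -> e k = S v (mkseq e k)].
Proof.
split=> [[e0 [He [S0 Sk]]] | [e0 He Sk]].
  by split=> // -[|k]; [rewrite e0; exact: S0 | rewrite -He; exact: Sk].
split=> //; split=> //; split=> [vV0 | k]; first by apply: (Sk 0); rewrite e0.
by rewrite He; exact: Sk.
Qed.

End InfinitePaths.

Lemma nested_nonempty_inter (T : finType) (P : nat -> T -> Prop) :
  (forall j y, P j.+1 y -> P j y) -> (forall j, exists y, P j y) ->
  exists y, forall j, P j y.
Proof.
move=> Pdec Pne; apply: contrapT => /forallNP none.
have Ple j j' y : j <= j' -> P j' y -> P j y.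
  move/subnK <-; elim: (j' - j) => [|d IHd]; first by rewrite add0n.
  by rewrite addSn => /Pdec /IHd.
have [J PJ] := choice (fun y => (existsNP _).2 (none y)).
have [y Py] := Pne (\max_y J y).
by apply: (PJ y); apply: Ple Py; apply: leq_bigmax.
Qed.

Section Konig.
Variables (T : finType) (D : nat -> T -> Prop) (R : nat -> T -> T -> Prop).
Hypotheses (D_nonempty : forall k, exists y, D k y)
           (D_pred : forall k x, D k.+1 x -> exists2 y, D k y & R k y x).

Fixpoint extends (k j : nat) (y : T) : Prop :=
  if j is j'.+1 then D k y /\ exists2 z, R k y z & extends k.+1 j' z else D k y.

Lemma extends_D k j y : extends k j y -> D k y.
Proof. by case: j => [|j] // []. Qed.

Lemma extendsS k j y : extends k j.+1 y -> extends k j y.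
Proof.
elim: j k y => [|j IHj] k y [Dy [z Rz Hz]] //.
by split=> //; exists z => //; apply: IHj.
Qed.

Lemma extends_exists k j : exists y, extends k j y.
Proof.
elim: j k => [|j IHj] k; first exact: D_nonempty.
have [z Hz] := IHj k.+1; have [y Dy Ryz] := D_pred (extends_D Hz).
by exists y; split=> //; exists z.
Qed.

Definition infinitely_extends k y := forall j, extends k j y.

Lemma infinitely_extends0 : exists y, infinitely_extends 0 y.
Proof.
by apply: nested_nonempty_inter => [j y | j]; [exact: extendsS | exact: extends_exists].
Qed.

Lemma infinitely_extendsS k y :
  infinitely_extends k y -> exists z, R k y z /\ infinitely_extends k.+1 z.
Proof.
move=> Hy; have [z Hz] : exists z, forall j, R k y z /\ extends k.+1 j z.
  apply: nested_nonempty_inter => [j z [Rz /extendsS] | j] //.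
  by have [_ [z Rz Hz]] := Hy j.+1; exists z.
by exists z; split=> [|j]; [case: (Hz 0) | case: (Hz j)].
Qed.

Lemma konig : exists x : nat -> T, forall k, D k (x k) /\ R k (x k) (x k.+1).
Proof.
have [y0 y0_inf] := infinitely_extends0.
have step_ex k y : exists z,
    infinitely_extends k y -> R k y z /\ infinitely_extends k.+1 z.
  case: (EM (infinitely_extends k y)) => [/infinitely_extendsS [z Hz] | Ny].
    by exists z.
  by exists y.
pose step k y := sval (cid (step_ex k y)).
pose x := nat_rect (fun=> T) y0 step.
have x_inf k : infinitely_extends k (x k).
  by elim: k => // k /(svalP (cid (step_ex _ _))) [].
exists x => k; split; first exact: extends_D (x_inf k 0).
by have [] := svalP (cid (step_ex k (x k))) (x_inf k).
Qed.

End Konig.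

Section ChromaticMemory.
Variables (C : Type) (A : arena C) (S1 : strategy A).
Variables (M : finType) (minit : M) (delta : M -> edge A -> M) (U : {set node A}).

Definition S1_reply (t : node A) (m : M) (e : edge A) : Prop :=
  src e = t /\ forall v s, is_fpath v s -> ftarget v s = t -> t \in V0 A ->
    foldl delta minit s = m -> e = S1 v s.

(* The fallback branch is never taken when S1 is an M-strategy (mem_moveP). *)
Definition mem_move (t : node A) (m : M) : edge A :=
  if pselect (exists e, S1_reply t m e) is left ex then sval (cid ex)
  else sval (cid (out_edge t)).

Definition tracker := {ffun node A -> option M}.

Definition admissible (f : tracker) (c : C) (u : node A) (e : edge A) : Prop :=
  exists2 m, f (src e) = Some m &
    [/\ col e = c, tgt e = u & src e \in V0 A -> e = mem_move (src e) m].

Definition chosen_edge (f : tracker) (c : C) (u : node A) : option (edge A) :=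
  [pick e | `[< admissible f c u e >] ].

Definition track_step (f : tracker) (c : C) : tracker :=
  [ffun u => if chosen_edge f c u is Some e then omap (delta^~ e) (f (src e)) else None].

Definition tracker_init : tracker := [ffun u => if u \in U then Some minit else None].

Fixpoint track (w : nat -> C) (k : nat) : tracker :=
  if k is k'.+1 then track_step (track w k') (w k') else tracker_init.

Definition track_edge (f : tracker) (e : edge A) : tracker := track_step f (col e).

(* The default minit is junk: along S2-plays from U the current node is tracked. *)
Definition S2 : strategy A := fun v s =>
  mem_move (ftarget v s) (odflt minit (foldl track_edge tracker_init s (ftarget v s))).

Lemma chosen_edgeP f c u e : chosen_edge f c u = Some e -> admissible f c u e.
Proof. by rewrite /chosen_edge; case: pickP => // e' /asboolP adm [<-]. Qed.

Lemma track_step_chosen f c u e m :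
  chosen_edge f c u = Some e -> f (src e) = Some m -> track_step f c u = Some (delta m e).
Proof. by move=> ce fe; rewrite ffunE ce fe. Qed.

Lemma track_step_admissible f c u e : admissible f c u e -> track_step f c u != None.
Proof.
rewrite ffunE /chosen_edge; case: pickP => [e' /asboolP [m' -> _] // | none adm].
by have := none e; rewrite (asboolT adm).
Qed.

Lemma track_step_pred f c u :
  track_step f c u != None -> exists2 e, chosen_edge f c u = Some e & f (src e) != None.
Proof.
rewrite ffunE; case: chosen_edge => // e fe; exists e => //.
by move: fe; case: (f (src e)).
Qed.

Lemma foldl_track_edge e k :
  foldl track_edge tracker_init (mkseq e k) = track (fun i => col (e i)) k.
Proof. by elim: k => // k IHk; rewrite mkseqS foldl_rcons IHk. Qed.

Lemma S2_mem : mem_strategy tracker_init track_edge S2.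
Proof. by move=> v1 s1 v2 s2 _ _ t12 _ f12; rewrite /S2 t12 f12. Qed.

Lemma S2_play_tracked u e : u \in U -> consistent_inf_path S2 u e ->
  forall k, track (fun i => col (e i)) k (src (e k)) != None.
Proof.
move=> uU /consistent_inf_pathE [e0 chain_e S2_e]; elim=> [|k IHk].
  by rewrite /= ffunE e0 uU.
rewrite -chain_e /=; apply: (@track_step_admissible _ _ _ (e k)).
move: IHk; case tk: (track _ k (src (e k))) => [m|] // _.
exists m => //; split=> // eV0.
by rewrite {1}S2_e // /S2 foldl_track_edge (ftarget_mkseq _ e0 chain_e) tk.
Qed.

Section Correctness.
Hypotheses (S1_strategy : is_strategy S1) (S1_mem : mem_strategy minit delta S1).

Lemma mem_moveP t m : S1_reply t m (mem_move t m).
Proof.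
rewrite /mem_move; case: pselect => [ex | no_reply]; first exact: svalP.
exfalso; apply: no_reply.
case: (EM (exists v s, [/\ is_fpath v s, ftarget v s = t, t \in V0 A &
                          foldl delta minit s = m])) => [[v [s [vs ts tV0 ms]]] | none].
  exists (S1 v s); split=> [|v' s' vs' ts' _ ms']; first by rewrite S1_strategy // ts.
  by apply: S1_mem; rewrite ?ts ?ts' ?ms ?ms'.
have [e se] := out_edge t; exists e; split=> // v s vs ts tV0 ms.
by exfalso; apply: none; exists v, s.
Qed.

Lemma mem_move_src t m : src (mem_move t m) = t.
Proof. by case: (mem_moveP t m). Qed.

Lemma mem_move_S1 v s : is_fpath v s -> ftarget v s \in V0 A ->
  mem_move (ftarget v s) (foldl delta minit s) = S1 v s.
Proof. by move=> vs tV0; have [_] := mem_moveP (ftarget v s) (foldl delta minit s); apply. Qed.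

Lemma S2_is_strategy : is_strategy S2.
Proof. by move=> v s _ _; exact: mem_move_src. Qed.

Lemma chosen_chain_colSU w (E : nat -> edge A) :
  (forall k, chosen_edge (track w k) (w k) (tgt (E k)) = Some (E k)) ->
  (forall k, tgt (E k) = src (E k.+1)) ->
  track w 0 (src (E 0)) != None -> colSU S1 U w.
Proof.
move=> chosenE chainE tracked0.
have E_adm k := chosen_edgeP (chosenE k).
have memE k : track w k (src (E k)) = Some (foldl delta minit (mkseq E k)).
  elim: k => [|k IHk]; first by move: tracked0; rewrite /= ffunE; case: ifP.
  by rewrite mkseqS foldl_rcons -chainE /= (track_step_chosen (chosenE k) IHk).
have E0U : src (E 0) \in U by move: tracked0; rewrite /= ffunE; case: ifP.
exists (src (E 0)) => //; exists E; split; last first.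
  by apply: funext => k; have [m _ [-> _ _]] := E_adm k.
have ftargetE k : ftarget (src (E 0)) (mkseq E k) = src (E k).
  exact: ftarget_mkseq.
apply/consistent_inf_pathE; split=> // k EkV0.
have [m tm [_ _ moveE]] := E_adm k.
move: tm moveE; rewrite memE => -[<-] -> //.
by rewrite -ftargetE mem_move_S1 ?ftargetE //; exact: fpath_mkseq.
Qed.

Lemma track_alive_colSU w : (forall k, exists u, track w k u != None) -> colSU S1 U w.
Proof.
move=> alive.
pose R k y x := exists2 e, chosen_edge (track w k) (w k) x = Some e & src e = y.
have [x Hx] : exists x : nat -> node A,
    forall k, track w k (x k) != None /\ R k (x k) (x k.+1).
  apply: (@konig _ (fun k u => track w k u != None) R alive).
  by move=> k u /track_step_pred [e ce fe]; exists (src e) => //; exists e.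
have /choice[E HE] : forall k, exists e,
    chosen_edge (track w k) (w k) (x k.+1) = Some e /\ src e = x k.
  by move=> k; have [_ [e ce se]] := Hx k; exists e.
have tgtE k : tgt (E k) = x k.+1 by have [m _ [_ -> _]] := chosen_edgeP (HE k).1.
apply: (@chosen_chain_colSU w E) => [k | k | ].
- by rewrite tgtE; case: (HE k).
- by rewrite tgtE; case: (HE k.+1).
- by case: (HE 0) => _ ->; case: (Hx 0).
Qed.

Lemma S2_colSU w : colSU S2 U w -> colSU S1 U w.
Proof.
move=> [u uU [e [play_e w_e]]]; rewrite w_e; apply: track_alive_colSU => k.
by exists (src (e k)); exact: (S2_play_tracked uU play_e k).
Qed.

End Correctness.
End ChromaticMemory.

Theorem theorem1 (C : Type) (A : arena C) (n q : nat) (U : {set node A})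
    (S1 : strategy A) :
  0 < n -> 0 < q -> #|node A| = n ->
  is_strategy S1 -> q_state q S1 ->
  exists S2 : strategy A,
    is_strategy S2 /\ chromatic_q_state ((q + 1) ^ n) S2 /\
    (forall w, colSU S2 U w -> colSU S1 U w).
Proof.
move=> _ _ card_node S1_strategy [M [minit [delta [card_M S1_mem]]]].
exists (S2 S1 minit delta U); split; first exact: S2_is_strategy.
split; last exact: S2_colSU.
exists (tracker A M), (tracker_init minit U), (track_edge S1 minit delta).
split; first by rewrite card_ffun card_option card_M card_node addn1.
by split; [exact: S2_mem | exists (track_step S1 minit delta)].
Qed.
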